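(* Let $L$ be an $R_0$-algebra, $k\in[0,1)$, and $\mu:L\to[0,1]$ a fuzzy subset. The following are equivalent: (1) $\mu$ is an $(\in,\in\vee q_k)$-fuzzy fated filter of $L$; (2) for every $t\in(0,1]$, the set $[\mu]_t^k=\{x\in L\mid \mu(x)\ge t \text{ or } \mu(x)+t+k>1\}$ is either empty or a fated filter of $L$.
   Context: An $R_0$-algebra is a bounded distributive lattice $(L,\wedge,\vee,0,1)$ with an order-reversing involution $\neg$ and a binary operation $\to$ such that for all $x,y,z\in L$: $x\to y=\neg y\to\neg x$; $1\to x=x$; $(y\to z)\wedge((x\to y)\to(x\to z))=y\to z$; $x\to(y\to z)=y\to(x\to z)$; $x\to(y\vee z)=(x\to y)\vee(x\to z)$; $(x\to y)\vee((x\to y)\to(\neg x\vee y))=1$. A fated filter of $L$ is a nonempty subset $A\subseteq L$ with $1\in A$ such that for all $x,y\in L$ and $a\in A$, $a\to((x\to y)\to x)\in A$ implies $x\in A$. For $x\in L$, $t\in(0,1]$: $x_t\in\mu$ iff $\mu(x)\ge t$; $x_t\,q_k\,\mu$ iff $\mu(x)+t+k>1$; $x_t\in\vee q_k\,\mu$ iff $x_t\in\mu$ or $x_t\,q_k\,\mu$. $\mu$ is an $(\in,\in\vee q_k)$-fuzzy fated filter of $L$ if (i) for all $x\in L$, $t\in(0,1]$: $x_t\in\mu\Rightarrow 1_t\in\vee q_k\,\mu$; and (ii) for all $x,a,y\in L$, $t,s\in(0,1]$: if $(a\to((x\to y)\to x))_t\in\mu$ and $a_s\in\mu$ then $x_{\min\{t,s\}}\in\vee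 q_k\,\mu$. *)

From Stdlib Require Import Reals.
Open Scope R_scope.

Record R0_algebra := {
  car :> Type;
  meet : car -> car -> car;
  join : car -> car -> car;
  zero : car;
  one : car;
  neg : car -> car;
  imp : car -> car -> car;
  meetC : forall x y, meet x y = meet y x;
  joinC : forall x y, join x y = join y x;
  meetA : forall x y z, meet x (meet y z) = meet (meet x y) z;
  joinA : forall x y z, join x (join y z) = join (join x y) z;
  meet_join_absorb : forall x y, meet x (join x y) = x;
  join_meet_absorb : forall x y, join x (meet x y) = x;
  meet_joinDr : forall x y z, meet x (join y z) = join (meet x y) (meet x z);
  meet0 : forall x, meet zero x = zero;
  join1 : forall x, join one x = one;
  (* order-reversing involution; x <= y iff meet x y = x *)
  negK : forall x, neg (neg x) = x;
  neg_antitone : forall x y, meet x y = x -> meet (neg y) (neg x) = neg y;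
  R1 : forall x y, imp x y = imp (neg y) (neg x);
  R2 : forall x, imp one x = x;
  R3 : forall x y z, meet (imp y z) (imp (imp x y) (imp x z)) = imp y z;
  R4 : forall x y z, imp x (imp y z) = imp y (imp x z);
  R5 : forall x y z, imp x (join y z) = join (imp x y) (imp x z);
  R6 : forall x y, join (imp x y) (imp (imp x y) (join (neg x) y)) = one
}.

Arguments meet {_}. Arguments join {_}. Arguments zero {_}. Arguments one {_}.
Arguments neg {_}. Arguments imp {_}.

Definition fated_filter (L : R0_algebra) (A : L -> Prop) : Prop :=
  (exists z, A z) /\ A one /\
  forall x y a : L, A a -> A (imp a (imp (imp x y) x)) -> A x.

Definition fp_in (L : R0_algebra) (mu : L -> R) (x : L) (t : R) : Prop :=
  mu x >= t.
Definition fp_q (L : R0_algebra) (k : R) (mu : L -> R) (x : L) (t : R) : Prop :=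
  mu x + t + k > 1.
Definition fp_in_or_q (L : R0_algebra) (k : R) (mu : L -> R) (x : L) (t : R) : Prop :=
  fp_in L mu x t \/ fp_q L k mu x t.

Definition in_inq_fuzzy_fated_filter (L : R0_algebra) (k : R) (mu : L -> R) : Prop :=
  (forall (x : L) (t : R), 0 < t <= 1 ->
     fp_in L mu x t -> fp_in_or_q L k mu one t) /\
  (forall (x a y : L) (t s : R), 0 < t <= 1 -> 0 < s <= 1 ->
     fp_in L mu (imp a (imp (imp x y) x)) t -> fp_in L mu a s ->
     fp_in_or_q L k mu x (Rmin t s)).

Definition level_set (L : R0_algebra) (k : R) (mu : L -> R) (t : R) : L -> Prop :=
  fun x => mu x >= t \/ mu x + t + k > 1.

From Stdlib Require Import Reals Lra Classical.
Open Scope R_scope.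

(** Both conditions are governed by the threshold [(1 - k) / 2]: a value of
    [mu] lies in every level set [[mu]_t^k] as soon as it reaches the threshold,
    and membership in a level set only depends on the value of [mu] and is
    upward closed.  Condition (1) forces [mu 1] and [mu x] (for [x]
    fated over [a]) to dominate the relevant minimum capped at the threshold; this
    in turn makes every nonempty level set a fated filter.  Conversely, testing
    (2) at the level [t] (resp. [min t s]) gives back the two clauses of (1). *)

Definition in_level (k t u : R) : Prop := u >= t \/ u + t + k > 1.

Lemma in_level_mono (k t u v : R) : u <= v -> in_level k t u -> in_level k t v.
Proof. unfold in_level; lra. Qed.

Lemma in_level_Rmin (k t u v : R) :
  in_level k t u -> in_level k t v -> in_level k t (Rmin u v).
Proof. exact (Rmin_case u v (in_level k t)). Qed.

Lemma in_level_half (k t : R) : in_level k t ((1 - k) / 2).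
Proof. unfold in_level; lra. Qed.

Lemma in_level_ge_Rmin_half (k t u w : R) :
  in_level k t w -> u >= Rmin w ((1 - k) / 2) -> in_level k t u.
Proof.
  intros Hw Hu; apply (in_level_mono _ _ (Rmin w ((1 - k) / 2))); [lra|].
  apply in_level_Rmin; [exact Hw | apply in_level_half].
Qed.

(* If [u] is in the level [s] of every admissible [s <= w], testing at
   [s = min w ((1 - k) / 2)] rules out the [q_k] alternative. *)
Lemma ge_Rmin_half_of_in_level (k u w : R) : 0 <= k -> 0 <= u ->
  (forall s, 0 < s <= 1 -> s <= w -> in_level k s u) ->
  u >= Rmin w ((1 - k) / 2).
Proof.
  intros hk hu H; apply Rnot_lt_ge; intros Hlt.
  set (s := Rmin w ((1 - k) / 2)) in *.
  assert (sw : s <= w) by apply Rmin_l.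
  assert (sc : s <= (1 - k) / 2) by apply Rmin_r.
  destruct (H s ltac:(lra) sw) as [c | c]; lra.
Qed.

Section FuzzyFatedFilter.

Variables (L : R0_algebra) (k : R) (mu : L -> R).
Hypotheses (hk : 0 <= k) (hmu : forall x : L, 0 <= mu x).

Lemma fuzzy_fated_one_ge (x : L) : in_inq_fuzzy_fated_filter L k mu ->
  mu one >= Rmin (mu x) ((1 - k) / 2).
Proof.
  intros [Hone _]; apply ge_Rmin_half_of_in_level; [exact hk | apply hmu |].
  intros s Hs Hsx; exact (Hone x s Hs (Rle_ge _ _ Hsx)).
Qed.

Lemma fuzzy_fated_ge (x a y : L) : in_inq_fuzzy_fated_filter L k mu ->
  mu x >= Rmin (Rmin (mu a) (mu (imp a (imp (imp x y) x)))) ((1 - k) / 2).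
Proof.
  intros [_ Hfated]; apply ge_Rmin_half_of_in_level; [exact hk | apply hmu |].
  intros s Hs Hsw.
  pose proof (Rmin_l (mu a) (mu (imp a (imp (imp x y) x)))).
  pose proof (Rmin_r (mu a) (mu (imp a (imp (imp x y) x)))).
  rewrite <- (Rmin_left s s (Rle_refl s)).
  apply (Hfated x a y s s Hs Hs); unfold fp_in; lra.
Qed.

Lemma level_set_fated_filter (t : R) : in_inq_fuzzy_fated_filter L k mu ->
  (exists z, level_set L k mu t z) -> fated_filter L (level_set L k mu t).
Proof.
  intros H [z Hz]; split; [now exists z | split].
  - exact (in_level_ge_Rmin_half _ _ _ _ Hz (fuzzy_fated_one_ge z H)).
  - intros x y a Ha Hb.
    apply (in_level_ge_Rmin_half _ _ _ _ (in_level_Rmin _ _ _ _ Ha Hb)).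
    apply fuzzy_fated_ge, H.
Qed.

Lemma fuzzy_fated_of_level_sets :
  (forall t, 0 < t <= 1 ->
     (forall x : L, ~ level_set L k mu t x) \/ fated_filter L (level_set L k mu t)) ->
  in_inq_fuzzy_fated_filter L k mu.
Proof.
  intros H.
  assert (Hfilter : forall t z, 0 < t <= 1 -> mu z >= t ->
            fated_filter L (level_set L k mu t)).
  { intros t z Ht Hz; destruct (H t Ht) as [E | F]; [|exact F].
    exfalso; apply (E z); left; exact Hz. }
  split.
  - intros x t Ht Hx; apply (Hfilter t x Ht Hx).
  - intros x a y t s Ht Hs Hb Ha; unfold fp_in in *.
    pose proof (Rmin_l t s); pose proof (Rmin_r t s).
    assert (Hts : 0 < Rmin t s <= 1) by (apply Rmin_case; lra).
    destruct (Hfilter _ a Hts ltac:(lra)) as [_ [_ Hmp]].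
    apply (Hmp x y a); left; lra.
Qed.

End FuzzyFatedFilter.

Theorem theorem3p24 (L : R0_algebra) (k : R) (mu : L -> R)
  (hk : 0 <= k < 1) (hmu : forall x : L, 0 <= mu x <= 1) :
  in_inq_fuzzy_fated_filter L k mu <->
  (forall t : R, 0 < t <= 1 ->
     (forall x : L, ~ level_set L k mu t x) \/ fated_filter L (level_set L k mu t)).
Proof.
  assert (hk0 : 0 <= k) by apply hk.
  assert (hmu0 : forall x, 0 <= mu x) by apply hmu.
  split.
  - intros H t _.
    destruct (classic (exists z, level_set L k mu t z)) as [Hne | Hempty].
    + right; exact (level_set_fated_filter L k mu hk0 hmu0 t H Hne).
    + left; intros x Hx; apply Hempty; now exists x.
  - exact (fuzzy_fated_of_level_sets L k mu).
Qed.
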